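(* Fix a set of mean-field flows $\mathcal{S}=\{\mu^1,\dots,\mu^K\}$ and let $\pi^a,\pi^b\in\mathcal{B}^{\mathrm{RQE}}_{\mathrm{opt}}(\mathcal{S})$. Suppose there is $t\in\{0,\dots,T-1\}$ such that $Q^{\pi^a}_{\mu^k,t}(x,u)=Q^{\pi^b}_{\mu^k,t}(x,u)$ for all $x\in\mathcal{X}$, $u\in\mathcal{U}$, $k\in\{1,\dots,K\}$. Then (i) $\pi^a_t(\cdot\mid x)=\pi^b_t(\cdot\mid x)$ for all $x\in\mathcal{X}$, and (ii) if $t\ge1$, $Q^{\pi^a}_{\mu^k,t-1}(x,u)=Q^{\pi^b}_{\mu^k,t-1}(x,u)$ for all $x,u,k$.
   Context: Let $\mathcal{X},\mathcal{U}$ be finite nonempty sets and $T\ge1$. $\mathcal{P}(E)$ denotes probability vectors on a finite set $E$. For $t\in\{0,\dots,T-1\}$: transition kernels $f_t(x'\mid x,u,\mu)$ (a distribution over $x'$ for each $x,u$ and $\mu\in\mathcal{P}(\mathcal{X})$) and bounded rewards $r_t(x,u,\mu)$. A policy is $\pi=(\pi_0,\dots,\pi_{T-1})$ with $\pi_t(\cdot\mid x)\in\mathcal{P}(\mathcal{U})$; $\Pi_t$ the set of time-$t$ decision rules. A mean-field flow is a sequence $\mu=(\mu_0,\dots,\mu_T)$ in $\mathcal{P}(\mathcal{X})$. Q-functions: $Q^\pi_{\mu,T-1}(x,u)=r_{T-1}(x,u,\mu_{T-1})$, $Q^\pi_{\mu,t}(x,u)=r_t(x,u,\mu_t)+\sum_{x'}f_t(x'\mid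 x,u,\mu_t)V^\pi_{\mu,t+1}(x')$ for $t<T-1$, with $V^\pi_{\mu,t}(x)=\sum_u\pi_t(u\mid x)Q^\pi_{\mu,t}(x,u)$. Data: finite $\mathbb{M}=\{\mu_0^1,\dots,\mu_0^K\}\subset\mathcal{P}(\mathcal{X})$ with probabilities $w_k=\Gamma^*(\mu_0^k)$; $\tau>0$; $\alpha>0$; a strictly convex regularizer $\nu:\mathcal{P}(\mathcal{U})\to\mathbb{R}$. A set of flows $\mathcal{S}=\{\mu^1,\dots,\mu^K\}$ has $\mu^k$ starting at $\mu_0^k$. Cost: $c_t^{\pi,\alpha}(x;\mathcal{S})=\frac1\tau\log\big(\sum_kw_k\exp(-\tau\sum_u\pi_t(u\mid x)Q^\pi_{\mu^k,t}(x,u))\big)+\alpha\nu(\pi_t(\cdot\mid x))$. $(\pi'_t,\pi_{-t})$ denotes $\pi$ with time-$t$ component replaced by $\pi'_t\in\Pi_t$. $\mathcal{B}^{\mathrm{RQE}}_{\mathrm{opt}}(\mathcal{S})$ is the set of policies $\pi$ such that for all $t,x$, $\pi_t(\cdot\mid x)$ minimizes $c_t^{(\pi'_t,\pi_{-t}),\alpha}(x;\mathcal{S})$ over $\pi'_t\in\Pi_t$. *)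

From HB Require Import structures.
From mathcomp Require Import all_boot all_order all_algebra.
From mathcomp Require Import all_classical all_reals all_analysis.
Set Implicit Arguments. Unset Strict Implicit. Unset Printing Implicit Defensive.
Import Order.TTheory GRing.Theory Num.Theory.
Local Open Scope ring_scope.

Definition prob_vec (R : realType) (E : finType) (p : {ffun E -> R}) : Prop :=
  (forall e, 0 <= p e) /\ \sum_(e : E) p e = 1.

Definition is_policy (R : realType) (X U : finType) (T : nat)
  (pi : nat -> X -> {ffun U -> R}) : Prop :=
  forall t, (t < T)%N -> forall x, prob_vec (pi t x).

(* Q-function by backward recursion; n = number of remaining steps after t *)
Fixpoint Qrec (R : realType) (X U : finType)
  (f : nat -> X -> U -> {ffun X -> R} -> {ffun X -> R})
  (r : nat -> X -> U -> {ffun X -> R} -> R)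
  (pi : nat -> X -> {ffun U -> R}) (mu : nat -> {ffun X -> R})
  (n t : nat) (x : X) (u : U) : R :=
  match n with
  | 0 => r t x u (mu t)
  | n'.+1 => r t x u (mu t) +
      \sum_(x' : X) f t x u (mu t) x' *
        (\sum_(u' : U) pi t.+1 x' u' * Qrec f r pi mu n' t.+1 x' u')
  end.

Definition Qfun (R : realType) (X U : finType) (T : nat)
  (f : nat -> X -> U -> {ffun X -> R} -> {ffun X -> R})
  (r : nat -> X -> U -> {ffun X -> R} -> R)
  (pi : nat -> X -> {ffun U -> R}) (mu : nat -> {ffun X -> R})
  (t : nat) (x : X) (u : U) : R :=
  Qrec f r pi mu (T.-1 - t) t x u.

Definition Vfun (R : realType) (X U : finType) (T : nat)
  (f : nat -> X -> U -> {ffun X -> R} -> {ffun X -> R})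
  (r : nat -> X -> U -> {ffun X -> R} -> R)
  (pi : nat -> X -> {ffun U -> R}) (mu : nat -> {ffun X -> R})
  (t : nat) (x : X) : R :=
  \sum_(u : U) pi t x u * Qfun T f r pi mu t x u.

Definition replace_at (R : realType) (X U : finType)
  (pi : nat -> X -> {ffun U -> R}) (t : nat) (pi' : X -> {ffun U -> R}) :
  nat -> X -> {ffun U -> R} :=
  fun s => if s == t then pi' else pi s.

Definition rqe_cost (R : realType) (X U : finType) (T K : nat)
  (f : nat -> X -> U -> {ffun X -> R} -> {ffun X -> R})
  (r : nat -> X -> U -> {ffun X -> R} -> R)
  (w : 'I_K -> R) (tau alpha : R) (nu : {ffun U -> R} -> R)
  (pi : nat -> X -> {ffun U -> R}) (S : 'I_K -> nat -> {ffun X -> R})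
  (t : nat) (x : X) : R :=
  tau^-1 * ln (\sum_(k < K) w k *
      expR (- (tau * \sum_(u : U) pi t x u * Qfun T f r pi (S k) t x u)))
  + alpha * nu (pi t x).

Definition RQE_opt (R : realType) (X U : finType) (T K : nat)
  (f : nat -> X -> U -> {ffun X -> R} -> {ffun X -> R})
  (r : nat -> X -> U -> {ffun X -> R} -> R)
  (w : 'I_K -> R) (tau alpha : R) (nu : {ffun U -> R} -> R)
  (S : 'I_K -> nat -> {ffun X -> R}) (pi : nat -> X -> {ffun U -> R}) : Prop :=
  is_policy T pi /\
  forall t, (t < T)%N -> forall x (pi' : X -> {ffun U -> R}),
    (forall y, prob_vec (pi' y)) ->
    rqe_cost T f r w tau alpha nu pi S t x
      <= rqe_cost T f r w tau alpha nu (replace_at pi t pi') S t x.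

Definition strictly_convex_on_simplex (R : realType) (U : finType)
  (nu : {ffun U -> R} -> R) : Prop :=
  forall p q : {ffun U -> R}, prob_vec p -> prob_vec q -> p <> q ->
  forall l : R, 0 < l -> l < 1 ->
    nu [ffun u => l * p u + (1 - l) * q u] < l * nu p + (1 - l) * nu q.

(* The risk-sensitive cost at (t, x) depends on the decision rule pi_t(.|x)
   only through v |-> tau^-1 ln (sum_k w_k exp (-tau <v, Q_k>)) + alpha nu(v),
   where the Q_k involve only the later decision rules.  The log-sum-exp part
   is convex along segments (Cauchy-Schwarz) and nu is strictly convex, so
   this function has at most one minimiser on the simplex: if the two
   equilibria have the same Q-functions at t, their midpoint would be strictly
   better for one of them.  Equal decision rules and equal Q-functions at t
   then give equal value functions at t, hence equal Q-functions at t-1 by the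
   Bellman recursion. *)
From HB Require Import structures.
From mathcomp Require Import all_boot all_order all_algebra.
From mathcomp Require Import all_classical all_reals all_analysis.
From mathcomp Require Import zify ring lra.
Set Implicit Arguments.
Unset Strict Implicit.
Unset Printing Implicit Defensive.

Import Order.TTheory GRing.Theory Num.Theory.
Local Open Scope ring_scope.

Section WeightedSums.
Variables (R : realType) (I : finType) (w : I -> R).
Hypothesis w_ge0 : forall i, 0 <= w i.

Lemma weighted_cauchy_schwarz (a b : I -> R) :
  (\sum_i w i * (a i * b i)) ^+ 2 <=
  (\sum_i w i * a i ^+ 2) * (\sum_i w i * b i ^+ 2).
Proof.
set A := \sum_i w i * a i ^+ 2; set B := \sum_i w i * b i ^+ 2.
set C := \sum_i w i * (a i * b i).
have wa2_ge0 i : 0 <= w i * a i ^+ 2 by rewrite mulr_ge0 ?sqr_ge0.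
have [A0 | A_gt0] := eqVneq A 0.
  have wa0 i : w i * a i = 0.
    apply/eqP; rewrite -sqrf_eq0 exprMn expr2 -mulrA mulf_eq0; apply/orP; right.
    by rewrite (psumr_eq0P (fun i _ => wa2_ge0 i) A0).
  suff -> : C = 0 by rewrite A0 expr0n mul0r.
  by apply: big1 => i _; rewrite mulrA wa0 mul0r.
have {}A_gt0 : 0 < A by rewrite lt_def A_gt0 sumr_ge0.
pose s := - C / A.
have : 0 <= \sum_i w i * (a i * s + b i) ^+ 2.
  by apply: sumr_ge0 => i _; rewrite mulr_ge0 ?sqr_ge0.
have -> : \sum_i w i * (a i * s + b i) ^+ 2 = s ^+ 2 * A + 2 * s * C + B.
  rewrite /A /B /C !mulr_sumr -!big_split /=; apply: eq_bigr => i _; ring.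
have -> : s ^+ 2 * A + 2 * s * C + B = B - C ^+ 2 / A.
  by rewrite /s; field; rewrite gt_eqF.
by rewrite subr_ge0 ler_pdivrMr // mulrC.
Qed.

Lemma weighted_sum_expR_gt0 (c : I -> R) :
  0 < \sum_i w i -> 0 < \sum_i w i * expR (c i).
Proof.
move=> w_gt0.
have term_ge0 i : 0 <= w i * expR (c i) by rewrite mulr_ge0 ?expR_ge0.
rewrite lt_def sumr_ge0 // andbT; apply: contraTneq w_gt0 => /psumr_eq0P sum0.
suff -> : \sum_i w i = 0 by rewrite ltxx.
apply: big1 => i _; have /eqP := sum0 (fun i _ => term_ge0 i) i isT.
by rewrite mulf_eq0 (gt_eqF (expR_gt0 _)) orbF => /eqP.
Qed.

Lemma weighted_sum_expR_midpoint (c d : I -> R) :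
  (\sum_i w i * expR ((c i + d i) / 2)) ^+ 2 <=
  (\sum_i w i * expR (c i)) * (\sum_i w i * expR (d i)).
Proof.
have half_sqr (e : R) : expR (e / 2) ^+ 2 = expR e.
  by rewrite expr2 -expRD; congr expR; field.
have := weighted_cauchy_schwarz
  (fun i => expR (c i / 2)) (fun i => expR (d i / 2)).
rewrite /=; under eq_bigr do rewrite -expRD -mulrDl.
by under [X in _ <= X * _]eq_bigr do rewrite half_sqr;
   under [X in _ <= _ * X]eq_bigr do rewrite half_sqr.
Qed.

End WeightedSums.

Section RiskCost.
Variables (R : realType) (U : finType) (K : nat) (w : 'I_K -> R).
Variables (tau alpha : R) (nu : {ffun U -> R} -> R).
Hypotheses (w_ge0 : forall k, 0 <= w k) (w_sum1 : \sum_(k < K) w k = 1).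
Hypotheses (tau_gt0 : 0 < tau) (alpha_gt0 : 0 < alpha).
Hypothesis nu_strict_convex : strictly_convex_on_simplex nu.

Definition risk_cost (Q : 'I_K -> U -> R) (v : {ffun U -> R}) : R :=
  tau^-1 * ln (\sum_(k < K) w k * expR (- (tau * \sum_u v u * Q k u)))
  + alpha * nu v.

Definition mid_vec (p q : {ffun U -> R}) : {ffun U -> R} :=
  [ffun u => 2^-1 * p u + (1 - 2^-1) * q u].

Lemma prob_vec_mid p q : prob_vec p -> prob_vec q -> prob_vec (mid_vec p q).
Proof.
move=> [p_ge0 p_sum1] [q_ge0 q_sum1]; split.
  by move=> u; rewrite ffunE addr_ge0 // mulr_ge0 // ?p_ge0 ?q_ge0 //; lra.
under eq_bigr do rewrite ffunE.
by rewrite big_split /= -!mulr_sumr p_sum1 q_sum1; lra.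
Qed.

Lemma risk_cost_mid_lt Q p q : prob_vec p -> prob_vec q -> p <> q ->
  risk_cost Q (mid_vec p q) < 2^-1 * risk_cost Q p + 2^-1 * risk_cost Q q.
Proof.
move=> Pp Pq neq_pq.
pose E (v : {ffun U -> R}) k := - (tau * \sum_u v u * Q k u).
pose S v := \sum_(k < K) w k * expR (E v k).
have S_gt0 v : 0 < S v by apply: weighted_sum_expR_gt0; rewrite // w_sum1.
have E_mid k : E (mid_vec p q) k = (E p k + E q k) / 2.
  rewrite /E; under eq_bigr do rewrite ffunE mulrDl -!mulrA.
  by rewrite big_split /= -!mulr_sumr; field.
have ln_mid : ln (S (mid_vec p q)) <= 2^-1 * ln (S p) + 2^-1 * ln (S q).
  rewrite -mulrDr -lnM ?posrE // ler_pdivlMl // mulr_natl -lnXn ?S_gt0 //.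
  rewrite ler_ln ?posrE ?exprn_gt0 ?mulr_gt0 //.
  rewrite /S; under eq_bigr do rewrite E_mid.
  exact: weighted_sum_expR_midpoint.
have ln_part : tau^-1 * ln (S (mid_vec p q)) <=
    2^-1 * (tau^-1 * ln (S p)) + 2^-1 * (tau^-1 * ln (S q)).
  by rewrite mulrCA [_ * (tau^-1 * _)]mulrCA -mulrDr ler_wpM2l // ltW // invr_gt0.
have nu_part : alpha * nu (mid_vec p q) <
    2^-1 * (alpha * nu p) + 2^-1 * (alpha * nu q).
  have -> : 2^-1 * (alpha * nu p) + 2^-1 * (alpha * nu q) =
      alpha * (2^-1 * nu p + (1 - 2^-1) * nu q) by field.
  by rewrite ltr_pM2l // nu_strict_convex //; lra.
by rewrite /risk_cost -/(S _) -/(S p) -/(S q); lra.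
Qed.

Lemma risk_cost_minimizer_unique Q p q : prob_vec p -> prob_vec q ->
  risk_cost Q p <= risk_cost Q (mid_vec p q) ->
  risk_cost Q q <= risk_cost Q (mid_vec p q) -> p = q.
Proof.
move=> Pp Pq p_le q_le; apply: contrapT => neq_pq.
have := risk_cost_mid_lt Q Pp Pq neq_pq; lra.
Qed.

End RiskCost.


Section QFunctions.
Variables (R : realType) (X U : finType) (T : nat).
Variables (f : nat -> X -> U -> {ffun X -> R} -> {ffun X -> R}).
Variables (r : nat -> X -> U -> {ffun X -> R} -> R).

Lemma eq_Qrec_later (pi1 pi2 : nat -> X -> {ffun U -> R}) mu n t x u :
  (forall s, (t < s)%N -> pi1 s = pi2 s) ->
  Qrec f r pi1 mu n t x u = Qrec f r pi2 mu n t x u.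
Proof.
elim: n t x u => [|n IHn] t x u eq_pi //=.
congr (_ + _); apply: eq_bigr => x' _; congr (_ * _); apply: eq_bigr => u' _.
rewrite eq_pi // IHn // => s lt_s; exact/eq_pi/(ltn_trans _ lt_s).
Qed.

Lemma Qfun_replace_at pi mu t pi' x u :
  Qfun T f r (replace_at pi t pi') mu t x u = Qfun T f r pi mu t x u.
Proof. by apply: eq_Qrec_later => s lt_ts; rewrite /replace_at gtn_eqF. Qed.

Lemma Qfun_bellman pi mu t x u : (t.+1 < T)%N ->
  Qfun T f r pi mu t x u =
  r t x u (mu t) + \sum_x' f t x u (mu t) x' * Vfun T f r pi mu t.+1 x'.
Proof.
by move=> lt_tT; rewrite /Qfun (_ : T.-1 - t = (T.-1 - t.+1).+1)%N //; lia.
Qed.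

Variables (K : nat) (w : 'I_K -> R) (tau alpha : R) (nu : {ffun U -> R} -> R).

Lemma rqe_cost_replace_at S pi t x v :
  rqe_cost T f r w tau alpha nu (replace_at pi t (fun=> v)) S t x
  = risk_cost w tau alpha nu (fun k u => Qfun T f r pi (S k) t x u) v.
Proof.
rewrite /rqe_cost /risk_cost.
have -> : replace_at pi t (fun=> v) t x = v by rewrite /replace_at eqxx.
by under eq_bigr do under eq_bigr do rewrite Qfun_replace_at.
Qed.

Lemma RQE_opt_minimizes S pi t x v :
  RQE_opt T f r w tau alpha nu S pi -> (t < T)%N -> prob_vec v ->
  risk_cost w tau alpha nu (fun k u => Qfun T f r pi (S k) t x u) (pi t x)
  <= risk_cost w tau alpha nu (fun k u => Qfun T f r pi (S k) t x u) v.
Proof.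
move=> [_ pi_opt] lt_tT Pv.
by have := pi_opt t lt_tT x (fun=> v) (fun=> Pv); rewrite rqe_cost_replace_at.
Qed.

End QFunctions.

Theorem lemma1 (R : realType) (X U : finType) (T K : nat)
  (f : nat -> X -> U -> {ffun X -> R} -> {ffun X -> R})
  (r : nat -> X -> U -> {ffun X -> R} -> R)
  (mu0 : 'I_K -> {ffun X -> R}) (w : 'I_K -> R)
  (tau alpha : R) (nu : {ffun U -> R} -> R)
  (Sf : 'I_K -> nat -> {ffun X -> R})
  (pia pib : nat -> X -> {ffun U -> R}) (t : nat) :
  (0 < #|X|)%N -> (0 < #|U|)%N -> (1 <= T)%N ->
  (forall s x u m, prob_vec m -> prob_vec (f s x u m)) ->
  (exists M : R, forall s x u m, `|r s x u m| <= M) ->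
  (forall k, prob_vec (mu0 k)) -> injective mu0 ->
  (forall k, 0 <= w k) -> \sum_(k < K) w k = 1 ->
  0 < tau -> 0 < alpha -> strictly_convex_on_simplex nu ->
  (forall k s, (s <= T)%N -> prob_vec (Sf k s)) ->
  (forall k, Sf k 0%N = mu0 k) ->
  RQE_opt T f r w tau alpha nu Sf pia ->
  RQE_opt T f r w tau alpha nu Sf pib ->
  (t < T)%N ->
  (forall x u k, Qfun T f r pia (Sf k) t x u = Qfun T f r pib (Sf k) t x u) ->
  (forall x, pia t x = pib t x) /\
  ((1 <= t)%N -> forall x u k,
     Qfun T f r pia (Sf k) t.-1 x u = Qfun T f r pib (Sf k) t.-1 x u).
Proof.
move=> _ _ _ _ _ _ _ w_ge0 w_sum1 tau_gt0 alpha_gt0 nu_strict_convex _ _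
  opt_a opt_b lt_tT eqQ.
have eq_pi x : pia t x = pib t x.
  have [[Pa _] [Pb _]] := (opt_a, opt_b).
  have Pmid := prob_vec_mid (Pa t lt_tT x) (Pb t lt_tT x).
  have eqQfun : (fun k u => Qfun T f r pib (Sf k) t x u) =
                (fun k u => Qfun T f r pia (Sf k) t x u).
    by apply/funext => k; apply/funext => u; rewrite eqQ.
  apply: (risk_cost_minimizer_unique w_ge0 w_sum1 tau_gt0 alpha_gt0
           nu_strict_convex (Pa t lt_tT x) (Pb t lt_tT x)).
  - exact: (RQE_opt_minimizes x opt_a lt_tT Pmid).
  - by rewrite -eqQfun; exact: (RQE_opt_minimizes x opt_b lt_tT Pmid).
split=> // lt0t x u k.
case: t lt0t lt_tT eqQ eq_pi => // s _ lt_sT eqQ eq_pi /=.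
rewrite !Qfun_bellman //; congr (_ + _); apply: eq_bigr => x' _; congr (_ * _).
by apply: eq_bigr => u' _; rewrite eq_pi eqQ.
Qed.
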